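(* For all metric formulas $\varphi,\psi$ and every interval $I$, the following equivalences hold in MHT: $\neg(\varphi\,\mathsf{U}_I\,\psi)\equiv\neg\varphi\,\mathsf{R}_I\,\neg\psi$, $\neg(\varphi\,\mathsf{R}_I\,\psi)\equiv\neg\varphi\,\mathsf{U}_I\,\neg\psi$, $\neg(\varphi\,\mathsf{S}_I\,\psi)\equiv\neg\varphi\,\mathsf{T}_I\,\neg\psi$, $\neg(\varphi\,\mathsf{T}_I\,\psi)\equiv\neg\varphi\,\mathsf{S}_I\,\neg\psi$.
   Context: Write $[m,n)=\{i\in\mathbb{N}\mid m\le i<n\}$, $(m,n]=\{i\in\mathbb{N}\mid m<i\le n\}$. Metric formulas over a set of atoms $\mathcal{A}$: $\varphi::=p\mid\bot\mid\varphi_1\wedge\varphi_2\mid\varphi_1\vee\varphi_2\mid\varphi_1\to\varphi_2\mid\bullet_I\varphi\mid\varphi_1\mathsf{S}_I\varphi_2\mid\varphi_1\mathsf{T}_I\varphi_2\mid\circ_I\varphi\mid\varphi_1\mathsf{U}_I\varphi_2\mid\varphi_1\mathsf{R}_I\varphi_2$, $p\in\mathcal{A}$, $I=[m,n)$, $m\in\mathbb{N}$, $n\in\mathbb{N}\cup\{\omega\}$; $\neg\varphi:=\varphi\to\bot$, $\varphi\leftrightarrow\psi:=(\varphi\to\psi)\wedge(\psi\to\varphi)$. A timed HT-trace of length $\lambda\in\mathbb{N}\cup\{\omega\}$ is $\mathbf{M}=(\langle\mathbf{H},\mathbf{T}\rangle,\tau)$ with $H_i\subseteq T_i\subseteq\mathcal{A}$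 for $i\in[0,\lambda)$, $\tau:[0,\lambda)\to\mathbb{N}$, $\tau(0)=0$, $\tau(i)\le\tau(i+1)$. Satisfaction at $k\in[0,\lambda)$: $\bot$ never; $p$ iff $p\in H_k$; $\wedge,\vee$ usual; $\varphi\to\psi$ iff for both $\mathbf{M}'=\mathbf{M}$ and $\mathbf{M}'=(\langle\mathbf{T},\mathbf{T}\rangle,\tau)$, $\mathbf{M}',k\not\models\varphi$ or $\mathbf{M}',k\models\psi$; $\bullet_I\varphi$ iff $k>0$, $\mathbf{M},k-1\models\varphi$, $\tau(k)-\tau(k-1)\in I$; $\varphi\mathsf{S}_I\psi$ iff for some $j\in[0,k]$ with $\tau(k)-\tau(j)\in I$, $\mathbf{M},j\models\psi$ and $\mathbf{M},i\models\varphi$ for all $i\in(j,k]$; $\varphi\mathsf{T}_I\psi$ iff for all $j\in[0,k]$ with $\tau(k)-\tau(j)\in I$, $\mathbf{M},j\models\psi$ or $\mathbf{M},i\models\varphi$ for some $i\in(j,k]$; $\circ_I\varphi$ iff $k+1<\lambda$, $\mathbf{M},k+1\models\varphi$, $\tau(k+1)-\tau(k)\in I$; $\varphi\mathsf{U}_I\psi$ iff for some $j\in[k,\lambda)$ with $\tau(j)-\tau(k)\in I$, $\mathbf{M},j\models\psi$ and $\mathbf{M},i\models\varphi$ for all $i\in[k,j)$; $\varphi\mathsf{R}_I\psi$ iff for all $j\in[k,\lambda)$ with $\tau(j)-\tau(k)\in I$, $\mathbf{M},j\models\psi$ or $\mathbf{M},i\models\varphi$ for some $i\in[k,j)$. $\alpha\equiv\beta$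 in MHT means $\alpha\leftrightarrow\beta$ is satisfied at every $k\in[0,\lambda)$ of every timed HT-trace of every length $\lambda$. *)

From Stdlib Require Import Arith.

Set Implicit Arguments.

(* Extended naturals N ∪ {ω}: [None] stands for ω. *)
Definition enat := option nat.

Definition below (n : enat) (i : nat) : Prop :=
  match n with None => True | Some n' => i < n' end.

(* Interval J = [m, n) with m ∈ N, n ∈ N ∪ {ω}. *)
Record interval := Intv { ilo : nat; ihi : enat }.

Definition in_intv (J : interval) (d : nat) : Prop :=
  ilo J <= d /\ below (ihi J) d.

Inductive formula (A : Type) : Type :=
| Atom : A -> formula A
| Bot : formula A
| And : formula A -> formula A -> formula A
| Or : formula A -> formula A -> formula A
| Imp : formula A -> formula A -> formula A
| Prev : interval -> formula A -> formula A
| Since : interval -> formula A -> formula A -> formula A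
| Trigger : interval -> formula A -> formula A -> formula A
| Next : interval -> formula A -> formula A
| Until : interval -> formula A -> formula A -> formula A
| Release : interval -> formula A -> formula A -> formula A.

Arguments Bot {A}.

Definition Neg A (phi : formula A) : formula A := Imp phi Bot.
Definition Iff A (phi psi : formula A) : formula A :=
  And (Imp phi psi) (Imp psi phi).

Definition is_trace A (lam : enat) (H T : nat -> A -> Prop) (tau : nat -> nat)
  : Prop :=
  (forall i, below lam i -> forall p, H i p -> T i p) /\
  tau 0 = 0 /\
  (forall i, below lam (S i) -> tau i <= tau (S i)).

(* Satisfaction of [phi] at [k] in the trace with "here" world [W]
   (either H or T) and "there" world [T]. Implication quantifies over both
   M = (<H,T>,tau) and (<T,T>,tau). *)
Fixpoint sat A (lam : enat) (T : nat -> A -> Prop) (tau : nat -> nat)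
  (W : nat -> A -> Prop) (k : nat) (phi : formula A) {struct phi} : Prop :=
  match phi with
  | Atom p => W k p
  | Bot => False
  | And a b => sat lam T tau W k a /\ sat lam T tau W k b
  | Or a b => sat lam T tau W k a \/ sat lam T tau W k b
  | Imp a b =>
      (sat lam T tau W k a -> sat lam T tau W k b) /\
      (sat lam T tau T k a -> sat lam T tau T k b)
  | Prev J a =>
      0 < k /\ sat lam T tau W (k - 1) a /\ in_intv J (tau k - tau (k - 1))
  | Since J a b =>
      exists j, j <= k /\ in_intv J (tau k - tau j) /\ sat lam T tau W j b /\
        (forall i, j < i -> i <= k -> sat lam T tau W i a)
  | Trigger J a b =>
      forall j, j <= k -> in_intv J (tau k - tau j) ->
        sat lam T tau W j b \/ (exists i, j < i /\ i <= k /\ sat lam T tau W i a)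
  | Next J a =>
      below lam (S k) /\ sat lam T tau W (S k) a /\ in_intv J (tau (S k) - tau k)
  | Until J a b =>
      exists j, k <= j /\ below lam j /\ in_intv J (tau j - tau k) /\
        sat lam T tau W j b /\ (forall i, k <= i -> i < j -> sat lam T tau W i a)
  | Release J a b =>
      forall j, k <= j -> below lam j -> in_intv J (tau j - tau k) ->
        sat lam T tau W j b \/ (exists i, k <= i /\ i < j /\ sat lam T tau W i a)
  end.

Definition mht_equiv A (alpha beta : formula A) : Prop :=
  forall (lam : enat) (H T : nat -> A -> Prop) (tau : nat -> nat),
    is_trace lam H T tau ->
    forall k, below lam k -> sat lam T tau H k (Iff alpha beta).

From Stdlib Require Import Lia Classical.

(* Satisfaction persists from the "here" world H to the "there" world T, so a
   negation [~ chi] holds at H exactly when it holds at T, namely when [chi]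
   fails at T.  The temporal operators preserve this world-independence, hence
   both sides of each equivalence are evaluated in the total model <T,T>.
   There the semantics is classical and the four equivalences are the De Morgan
   dualities between the existential and universal quantifiers hidden in
   U/R and S/T. *)

Lemma below_le (lam : enat) i k : i <= k -> below lam k -> below lam i.
Proof. destruct lam; simpl; lia. Qed.

Lemma sat_persistent {A lam} {H T : nat -> A -> Prop} {tau} :
  is_trace lam H T tau ->
  forall phi k, below lam k -> sat lam T tau H k phi -> sat lam T tau T k phi.
Proof.
  intros [HsubT _] phi.
  induction phi as [p| |a IHa b IHb|a IHa b IHb|a _ b _|J a IHa
                   |J a IHa b IHb|J a IHa b IHb|J a IHa|J a IHa b IHb|J a IHa b IHb];
    intros k hk; simpl;
    assert (below_k : forall i, i <= k -> below lam i) by eauto using below_le.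
  - exact (HsubT k hk p).
  - tauto.
  - intros [ha hb]; split; [apply IHa|apply IHb]; assumption.
  - intros [ha|hb]; [left; apply IHa|right; apply IHb]; assumption.
  - tauto.
  - intros (hk0 & ha & hJ); split; [|split]; auto.
    apply IHa; [apply below_k; lia|assumption].
  - intros (j & hjk & hJ & hb & ha); exists j; split; [|split; [|split]]; auto.
  - intros hT j hjk hJ; destruct (hT j hjk hJ) as [hb|(i & hji & hik & ha)].
    + left; auto.
    + right; exists i; auto.
  - intros (hk1 & ha & hJ); split; [|split]; auto.
  - intros (j & hkj & hj & hJ & hb & ha); exists j; split; [|split; [|split; [|split]]]; auto.
    intros i hki hij; apply IHa; [apply (below_le lam i j); [lia|]|]; auto.
  - intros hR j hkj hj hJ; destruct (hR j hkj hj hJ) as [hb|(i & hki & hij & ha)].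
    + left; auto.
    + right; exists i; split; [|split]; auto.
      apply IHa; [apply (below_le lam i j); [lia|]|]; assumption.
Qed.

Definition ht_stable {A} lam (T W : nat -> A -> Prop) tau (phi : formula A) : Prop :=
  forall k, below lam k -> (sat lam T tau W k phi <-> sat lam T tau T k phi).

Section Stability.
Variables (A : Type) (lam : enat) (T W : nat -> A -> Prop) (tau : nat -> nat).

Lemma ht_stable_Neg (a : formula A) :
  (forall k, below lam k -> sat lam T tau W k a -> sat lam T tau T k a) ->
  ht_stable lam T W tau (Neg a).
Proof. intros persist k hk; simpl; specialize (persist k hk); tauto. Qed.

Lemma ht_stable_le {phi : formula A} :
  ht_stable lam T W tau phi -> forall i j, i <= j -> below lam j ->
  (sat lam T tau W i phi <-> sat lam T tau T i phi).
Proof. intros stable i j hij hj; apply stable, (below_le lam i j); assumption. Qed.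

Variables (J : interval) (a b : formula A).
Hypotheses (stable_a : ht_stable lam T W tau a) (stable_b : ht_stable lam T W tau b).

Lemma ht_stable_Until : ht_stable lam T W tau (Until J a b).
Proof.
  intros k _; simpl.
  split; intros (j & hkj & hj & hJ & hb & ha); exists j;
    (split; [|split; [|split; [|split]]]); try assumption.
  1,3: apply (stable_b j hj); assumption.
  all: intros i hki hij; apply (ht_stable_le stable_a i j); auto; lia.
Qed.

Lemma ht_stable_Release : ht_stable lam T W tau (Release J a b).
Proof.
  intros k _; simpl.
  split; intros hR j hkj hj hJ;
    destruct (hR j hkj hj hJ) as [hb|(i & hki & hij & ha)].
  1,3: left; apply (stable_b j hj); assumption.
  all: right; exists i; split; [|split]; auto; apply (ht_stable_le stable_a i j); auto; lia.
Qed.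

Lemma ht_stable_Since : ht_stable lam T W tau (Since J a b).
Proof.
  intros k hk; simpl.
  split; intros (j & hjk & hJ & hb & ha); exists j;
    (split; [|split; [|split]]); try assumption.
  1,3: apply (ht_stable_le stable_b j k); assumption.
  all: intros i hji hik; apply (ht_stable_le stable_a i k); auto.
Qed.

Lemma ht_stable_Trigger : ht_stable lam T W tau (Trigger J a b).
Proof.
  intros k hk; simpl.
  split; intros hT j hjk hJ;
    destruct (hT j hjk hJ) as [hb|(i & hji & hik & ha)].
  1,3: left; apply (ht_stable_le stable_b j k); assumption.
  all: right; exists i; split; [|split]; auto; apply (ht_stable_le stable_a i k); auto.
Qed.

End Stability.

Section TotalModel.
Variables (A : Type) (lam : enat) (T : nat -> A -> Prop) (tau : nat -> nat).
Variables (J : interval) (a b : formula A).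

Notation satT := (sat lam T tau T).

Lemma sat_total_Neg k (phi : formula A) : satT k (Neg phi) <-> ~ satT k phi.
Proof. simpl; tauto. Qed.

Lemma total_not_Until k : ~ satT k (Until J a b) <-> satT k (Release J (Neg a) (Neg b)).
Proof.
  simpl; split.
  - intros hU j hkj hj hJ.
    destruct (classic (satT j b)) as [hb|hb]; [right|tauto].
    apply NNPP; intros hna; apply hU; exists j; split; [|split; [|split; [|split]]]; auto.
    intros i hki hij; apply NNPP; intros hnai; apply hna; exists i; tauto.
  - intros hR (j & hkj & hj & hJ & hb & ha).
    destruct (hR j hkj hj hJ) as [|(i & hki & hij & hna)]; [tauto|].
    apply hna, ha; assumption.
Qed.

Lemma total_not_Release k : ~ satT k (Release J a b) <-> satT k (Until J (Neg a) (Neg b)).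
Proof.
  simpl; split.
  - intros hR; apply NNPP; intros hnU; apply hR; intros j hkj hj hJ.
    destruct (classic (satT j b)) as [hb|hb]; [left; assumption|right].
    apply NNPP; intros hna; apply hnU; exists j; split; [|split; [|split; [|split]]]; auto.
    intros i hki hij; split; intros; apply hna; exists i; tauto.
  - intros (j & hkj & hj & hJ & hnb & hna) hR.
    destruct (hR j hkj hj hJ) as [|(i & hki & hij & ha)]; [tauto|].
    apply (hna i); assumption.
Qed.

Lemma total_not_Since k : ~ satT k (Since J a b) <-> satT k (Trigger J (Neg a) (Neg b)).
Proof.
  simpl; split.
  - intros hS j hjk hJ.
    destruct (classic (satT j b)) as [hb|hb]; [right|tauto].
    apply NNPP; intros hna; apply hS; exists j; split; [|split; [|split]]; auto.
    intros i hji hik; apply NNPP; intros hnai; apply hna; exists i; tauto.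
  - intros hT (j & hjk & hJ & hb & ha).
    destruct (hT j hjk hJ) as [|(i & hji & hik & hna)]; [tauto|].
    apply hna, ha; assumption.
Qed.

Lemma total_not_Trigger k : ~ satT k (Trigger J a b) <-> satT k (Since J (Neg a) (Neg b)).
Proof.
  simpl; split.
  - intros hT; apply NNPP; intros hnS; apply hT; intros j hjk hJ.
    destruct (classic (satT j b)) as [hb|hb]; [left; assumption|right].
    apply NNPP; intros hna; apply hnS; exists j; split; [|split; [|split]]; auto.
    intros i hji hik; split; intros; apply hna; exists i; tauto.
  - intros (j & hjk & hJ & hnb & hna) hT.
    destruct (hT j hjk hJ) as [|(i & hji & hik & ha)]; [tauto|].
    apply (hna i); assumption.
Qed.

End TotalModel.

Lemma mht_equiv_of_total A (X Y : formula A) :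
  (forall lam H T tau, is_trace lam H T tau ->
     ht_stable lam T H tau X /\ ht_stable lam T H tau Y) ->
  (forall lam T tau k, below lam k ->
     (sat lam T tau T k X <-> sat lam T tau T k Y)) ->
  mht_equiv X Y.
Proof.
  intros stable total lam H T tau htrace k hk.
  destruct (stable lam H T tau htrace) as [sX sY].
  specialize (sX k hk); specialize (sY k hk); specialize (total lam T tau k hk).
  simpl; tauto.
Qed.

Theorem proposition8 :
  forall (A : Type) (phi psi : formula A) (I : interval),
    mht_equiv (Neg (Until I phi psi)) (Release I (Neg phi) (Neg psi)) /\
    mht_equiv (Neg (Release I phi psi)) (Until I (Neg phi) (Neg psi)) /\
    mht_equiv (Neg (Since I phi psi)) (Trigger I (Neg phi) (Neg psi)) /\
    mht_equiv (Neg (Trigger I phi psi)) (Since I (Neg phi) (Neg psi)).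
Proof.
  intros A phi psi I.
  split; [|split; [|split]]; apply mht_equiv_of_total.
  1,3,5,7: intros lam H T tau htrace;
    pose proof (sat_persistent htrace) as persist;
    split; auto using ht_stable_Neg, ht_stable_Until, ht_stable_Release,
                      ht_stable_Since, ht_stable_Trigger.
  all: intros lam T tau k _; rewrite sat_total_Neg.
  - apply total_not_Until.
  - apply total_not_Release.
  - apply total_not_Since.
  - apply total_not_Trigger.
Qed.
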